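(* Let $P$ be a finite poset of dimension $d$. There exists a constant $c_P$ such that for every positive integer $m$, if a set $S\subseteq[m]^d$ does not contain a copy of $P$, then $|S|\le c_P\, m^{d-1}$.
   Context: $[m]=\{1,\dots,m\}$ and $[m]^d$ is ordered pointwise: $(x_1,\dots,x_d)\le(y_1,\dots,y_d)$ iff $x_i\le y_i$ for all $i$. A subset $P'$ of a poset $Q$ is a copy of $P$ if the subposet of $Q$ induced on $P'$ is isomorphic to $P$. The (Dushnik–Miller) dimension of $P$ is the smallest positive integer $d$ for which there exist bijections $L_1,\dots,L_d:P\to[|P|]$ such that $p\le_P q$ iff $L_i(p)\le L_i(q)$ for every $i\in[d]$. *)

From mathcomp Require Import all_boot.
Set Implicit Arguments. Unset Strict Implicit. Unset Printing Implicit Defensive.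

Definition is_poset (T : finType) (le : rel T) : Prop :=
  reflexive le /\ antisymmetric le /\ transitive le.

Definition has_realizer (T : finType) (le : rel T) (d : nat) : Prop :=
  exists L : 'I_d -> T -> 'I_#|T|,
    (forall i, bijective (L i)) /\
    (forall p q, le p q = [forall i, L i p <= L i q]).

Definition poset_dim (T : finType) (le : rel T) (d : nat) : Prop :=
  0 < d /\ has_realizer le d /\
  (forall d', 0 < d' -> has_realizer le d' -> d <= d').

(* The grid [m]^d, coordinates shifted to {0,..,m-1} via 'I_m. *)
Definition grid (d m : nat) := {ffun 'I_d -> 'I_m}.

Definition grid_le (d m : nat) (x y : grid d m) : bool :=
  [forall i, x i <= y i].

(* S contains a copy of P: there is a subset of S whose induced subposet is
   isomorphic to P, i.e. an injective map f : P -> S with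
   p <=_P q  iff  f p <= f q. *)
Definition contains_copy (T : finType) (le : rel T) (d m : nat)
  (S : {set grid d m}) : Prop :=
  exists f : T -> grid d m,
    injective f /\ (forall p, f p \in S) /\
    (forall p q, le p q = grid_le (f p) (f q)).

From mathcomp Require Import all_boot zify.
From Stdlib Require Import Classical.
Set Implicit Arguments. Unset Strict Implicit. Unset Printing Implicit Defensive.

(* A realizer L_1, ..., L_d of P turns P into a d-dimensional permutation
   pattern v p = (L_1 p, ..., L_d p) in [k]^d, k = |P|, and a copy of P is
   exactly a map into S preserving the strict coordinate orders of v.  Sets
   avoiding such a pattern have size O(m^(d-1)), by the Marcus-Tardos block
   argument and induction on d.  Cut [m]^d into blocks of side s.  The
   nonempty blocks form an avoiding set in [m/s]^d, so there are O((m/s)^(d-1))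
   of them by induction on m.  A block is wide if its points project onto more
   than c s^(d-2) positions of the last d-1 coordinates (c the constant of
   dimension d-1), so that the projection contains the (d-1)-dimensional tail
   of v; at most k wide blocks share the same tail position and projection.
   A block is tall if its points use at least k first-coordinate offsets; the
   tall blocks with the same first position and offset set avoid the tail of v,
   hence number O((m/s)^(d-2)).  Every other block has at most c s^(d-2) k
   points.  For s large compared with c k 2^d the three counts add up to
   |S| <= C m^(d-1), with the same C as for the contracted set. *)

Lemma exists_increasing_in n k (A : {set 'I_n}) : k <= #|A| ->
  exists2 h : 'I_k -> 'I_n, forall j, h j \in A & {homo h : i j / i < j}.
Proof.
case: n A => [|n] A le_k_A.
  have k0 : k = 0.
    by apply/eqP; rewrite -leqn0 (leq_trans le_k_A) // (leq_trans (max_card _)) ?card_ord.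
  by subst k; exists id => -[].
have ltn_ord_trans : transitive (fun x y : 'I_n.+1 => x < y) by move=> y x z; apply: ltn_trans.
have sorted_A : sorted (fun x y : 'I_n.+1 => x < y) (enum A).
  rewrite /enum_mem -enumT /= sorted_filter //.
  by have := iota_ltn_sorted 0 n.+1; rewrite -val_enum_ord sorted_map.
exists (fun j => nth ord0 (enum A) j) => [j | i j lt_ij].
  by rewrite -mem_enum mem_nth // -cardE (leq_trans (ltn_ord j)).
by apply: (sorted_ltn_nth ltn_ord_trans); rewrite // inE -cardE (leq_trans (ltn_ord _)).
Qed.

Lemma card_fibers_le (A Y : finType) (f : A -> Y) (X : {set A}) r :
  (forall y, #|[set x in X | f x == y]| <= r) -> #|X| <= #|Y| * r.
Proof.
move=> fiber_le; rewrite -sum1_card (partition_big f xpredT) //= -sum_nat_const.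
apply: leq_sum => y _; apply: leq_trans (fiber_le y); rewrite sum1_card.
by apply: subset_leq_card; apply/subsetP => x; rewrite !inE.
Qed.

Lemma sum_mem_card (A : finType) (X : {set A}) : \sum_(a : A) (a \in X : nat) = #|X|.
Proof. by rewrite -sum1_card [RHS]big_mkcond; apply: eq_bigr => a _; case: (a \in X). Qed.

Lemma leq_rescale_pow a b s t m e : 0 < s -> s * t <= 2 * m ->
  a * 2 ^ e <= s ^ e * b -> a * t ^ e <= b * m ^ e.
Proof.
move=> s_gt0 st_le ab_le.
have [e0 | e_gt0] := posnP e; first by rewrite e0 !expn0 !muln1 mul1n in ab_le *.
have se_gt0 : 0 < s ^ e by rewrite expn_gt0 s_gt0.
rewrite -(leq_pmul2l se_gt0) mulnCA -expnMn.
apply: (@leq_trans (a * (2 * m) ^ e)); first by rewrite leq_mul2l leq_exp2r // st_le orbT.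
by rewrite expnMn !mulnA leq_mul2r ab_le orbT.
Qed.

Definition contains_pattern (T : finType) D k (v : T -> 'I_D -> 'I_k) m
    (S : {set grid D m}) : Prop :=
  exists2 G : T -> grid D m,
    forall p, G p \in S & forall p q i, v p i < v q i -> G p i < G q i.

Definition behead_pattern (T : finType) D k (v : T -> 'I_D.+1 -> 'I_k) :
  T -> 'I_D -> 'I_k := fun p j => v p (lift ord0 j).

Lemma card_grid D m : #|grid D m| = m ^ D.
Proof. by rewrite card_ffun !card_ord. Qed.

Definition block D m s (x : grid D m) : grid D (m %/ s.+1).+1 :=
  [ffun i => inord (x i %/ s.+1)].
Definition offset D m s (x : grid D m) : grid D s.+1 :=
  [ffun i => inord (x i %% s.+1)].
Definition grid_behead D m (x : grid D.+1 m) : grid D m :=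
  [ffun j => x (lift ord0 j)].

Lemma blockE D m s (x : grid D m) i : block s x i = x i %/ s.+1 :> nat.
Proof. by rewrite ffunE inordK // ltnS leq_div2r // ltnW. Qed.

Lemma offsetE D m s (x : grid D m) i : offset s x i = x i %% s.+1 :> nat.
Proof. by rewrite ffunE inordK // ltn_pmod. Qed.

Lemma grid_beheadE D m (x : grid D.+1 m) j : grid_behead x j = x (lift ord0 j).
Proof. by rewrite ffunE. Qed.

Lemma grid_behead_inj D m (x y : grid D.+1 m) :
  x ord0 = y ord0 -> grid_behead x = grid_behead y -> x = y.
Proof.
move=> xy0 xy_tail; apply/ffunP => i; case: (unliftP ord0 i) => [j -> | -> //].
by rewrite -!grid_beheadE xy_tail.
Qed.

Lemma block_offset_inj D m s (x y : grid D m) :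
  block s x = block s y -> offset s x = offset s y -> x = y.
Proof.
move=> xy_block xy_offset; apply/ffunP => i; apply/val_inj => /=.
by rewrite (divn_eq (x i) s.+1) (divn_eq (y i) s.+1) -!blockE -!offsetE xy_block xy_offset.
Qed.

Lemma ltn_block D m s (x y : grid D m) i : block s x i < block s y i -> x i < y i.
Proof.
rewrite !blockE => lt_div; apply: contraTT lt_div; rewrite -!leqNgt; exact: leq_div2r.
Qed.

Lemma ltn_offset D m s (x y : grid D m) i :
  block s x i = block s y i -> offset s x i < offset s y i -> x i < y i.
Proof.
move=> /(congr1 val); rewrite /= !blockE !offsetE => xy_div lt_mod.
by rewrite (divn_eq (x i) s.+1) (divn_eq (y i) s.+1) xy_div ltn_add2l.
Qed.

Lemma contains_patternS (T : finType) D k (v : T -> 'I_D.+1 -> 'I_k) m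
    (S : {set grid D.+1 m}) (x : T -> grid D.+1 m) :
  (forall p, x p \in S) ->
  (forall p q, v p ord0 < v q ord0 -> x p ord0 < x q ord0) ->
  (forall p q j, behead_pattern v p j < behead_pattern v q j ->
     x p (lift ord0 j) < x q (lift ord0 j)) ->
  contains_pattern v S.
Proof.
move=> xS x_head x_tail; exists x => // p q i.
by case: (unliftP ord0 i) => [j -> | ->]; [apply: x_tail | apply: x_head].
Qed.

Lemma contains_pattern_block (T : finType) D k (v : T -> 'I_D -> 'I_k) m s
    (S : {set grid D m}) :
  contains_pattern v (block s @: S) -> contains_pattern v S.
Proof.
case=> G GS G_incr.
have /fin_all_exists2[x xS Gx] :
  forall p, exists2 y, y \in S & G p = block s y by move=> p; apply/imsetP.
by exists x => // p q i /G_incr; rewrite !Gx; apply: ltn_block.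
Qed.

Lemma card_avoid_pattern1 (T : finType) k (v : T -> 'I_1 -> 'I_k) m
    (S : {set grid 1 m}) :
  ~ contains_pattern v S -> #|S| <= k.
Proof.
move=> avoid; rewrite leqNgt; apply/negP => lt_k_S; apply: avoid.
have card_heads : #|[set (x : grid 1 m) ord0 | x in S]| = #|S|.
  by apply: card_in_imset => x y _ _ xy0; apply/ffunP => i; rewrite (ord1 i).
have /exists_increasing_in[h hS h_incr] : k <= #|[set (x : grid 1 m) ord0 | x in S]|.
  by rewrite card_heads ltnW.
have /fin_all_exists2[x xS xh] :
  forall p, exists2 y, y \in S & h (v p ord0) = y ord0 by move=> p; apply/imsetP.
by exists x => // p q i; rewrite (ord1 i) -!xh; apply: h_incr.
Qed.

Lemma rescaled_constant_le c k K w W P : c * k * (2 * P) <= w ->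
  (c * W * k * (w + w * K * (2 * P)) + w * (w * W) * K) * P
    <= w * W * (w + w * K * (2 * P)).
Proof.
move=> large_w; set C := w + w * K * (2 * P).
have head_le : c * k * (2 * P) * (W * C) <= w * (W * C) by apply: leq_mul.
have tail_le : w * W * (w * K * (2 * P)) <= w * W * C by rewrite leq_mul2l leq_addl orbT.
nia.
Qed.

Section DimensionStep.

Variables (n k : nat) (T : finType) (v : T -> 'I_n.+2 -> 'I_k) (c : nat).
Hypothesis card_avoid_tail : forall M (X : {set grid n.+1 M}),
  ~ contains_pattern (behead_pattern v) X -> #|X| <= c * M ^ n.

Section Blocks.

Variables (s m : nat) (S : {set grid n.+2 m}).
Hypothesis avoid : ~ contains_pattern v S.

Local Notation blocks := (grid n.+2 (m %/ s.+1).+1).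

Definition block_points (b : blocks) := [set x in S | block s x == b].

Definition tail_profile b : {set grid n.+1 s.+1} :=
  [set grid_behead (offset s x) | x in block_points b].

Definition head_profile b : {set 'I_s.+1} :=
  [set offset s x ord0 | x in block_points b].

Definition wide_blocks := [set b | c * s.+1 ^ n < #|tail_profile b|].

Definition tall_blocks := [set b | k <= #|head_profile b|].

Lemma block_pointsP b y : y \in block_points b -> y \in S /\ block s y = b.
Proof. by rewrite inE => /andP[-> /eqP]. Qed.

Lemma card_block_points b :
  #|block_points b| <= #|tail_profile b| * #|head_profile b|.
Proof.
rewrite -cardsX -(@card_in_imset _ _
  (fun x => (grid_behead (offset s x), offset s x ord0)) (block_points b)).
  apply: subset_leq_card; apply/subsetP => _ /imsetP[x xb ->].
  by rewrite inE /=; apply/andP; split; apply/imsetP; exists x.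
move=> x y /block_pointsP[_ xb] /block_pointsP[_ yb] [xy_tail xy_head].
by apply: (block_offset_inj (s := s)); [rewrite xb yb | apply: grid_behead_inj].
Qed.

Lemma card_block_points_le b :
  #|block_points b| <= c * s.+1 ^ n * k * (b \in block s @: S)
    + s.+1 ^ n.+2 * (b \in wide_blocks) + s.+1 ^ n.+2 * (b \in tall_blocks).
Proof.
have [bS | bNS] := boolP (b \in block s @: S); last first.
  suff -> : block_points b = set0 by rewrite cards0.
  apply/setP => y; rewrite in_set0; apply/negbTE/negP => /block_pointsP[yS yb].
  by case/negP: bNS; apply/imsetP; exists y.
apply: leq_trans (card_block_points b) _.
have tail_le : #|tail_profile b| <= s.+1 ^ n.+1 by rewrite -card_grid max_card.
have head_le : #|head_profile b| <= s.+1 by rewrite -[X in _ <= X]card_ord max_card.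
have prod_le : #|tail_profile b| * #|head_profile b| <= s.+1 ^ n.+2.
  by rewrite expnSr leq_mul.
rewrite !inE; case: (leqP #|tail_profile b| (c * s.+1 ^ n)) => [narrow | _];
  case: (leqP k #|head_profile b|) => [_ | short] /=; rewrite ?muln0 ?muln1 ?addn0;
  try exact: leq_trans prod_le (leq_addl _ _).
by rewrite leq_mul // ltnW.
Qed.

Lemma card_wide_fiber l Q :
  #|[set b in wide_blocks | (grid_behead b, tail_profile b) == (l, Q)]| <= k.
Proof.
set F := [set b in _ | _]; rewrite leqNgt; apply/negP => lt_k_F; apply: avoid.
have inF b : b \in F ->
    [/\ c * s.+1 ^ n < #|tail_profile b|, grid_behead b = l & tail_profile b = Q].
  by rewrite !inE => /andP[? /eqP[? ?]].
have [b0 b0F] : exists b0, b0 \in F.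
  by apply/set0Pn; rewrite -card_gt0 (leq_ltn_trans _ lt_k_F).
have [g gQ g_incr] : contains_pattern (behead_pattern v) Q.
  apply: NNPP => /card_avoid_tail; have [wide _ <-] := inF _ b0F.
  by rewrite leqNgt wide.
have card_heads : #|[set (b : blocks) ord0 | b in F]| = #|F|.
  apply: card_in_imset => b b' /inF[_ bl _] /inF[_ b'l _] bb'0.
  by apply: grid_behead_inj; rewrite ?bl ?b'l.
have /exists_increasing_in[h hF h_incr] : k <= #|[set (b : blocks) ord0 | b in F]|.
  by rewrite card_heads ltnW.
have /fin_all_exists2[beta betaF beta_h] :
  forall p, exists2 b : blocks, b \in F & h (v p ord0) = b ord0 by move=> p; apply/imsetP.
have beta_tail p : grid_behead (beta p) = l by have [] := inF _ (betaF p).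
have /fin_all_exists2[x xb x_g] : forall p,
    exists2 y, y \in block_points (beta p) & g p = grid_behead (offset s y).
  move=> p; have := gQ p; have [_ _ <-] := inF _ (betaF p).
  by case/imsetP => y; exists y.
have x_block p : block s (x p) = beta p by have [] := block_pointsP (xb p).
apply: (contains_patternS (x := x)) => [p | p q | p q j lt_pq].
- by have [] := block_pointsP (xb p).
- move/h_incr; rewrite !beta_h => lt_beta.
  by apply: (ltn_block (s := s)); rewrite !x_block.
- apply: (ltn_offset (s := s)); first by rewrite !x_block -!grid_beheadE !beta_tail.
  by rewrite -!grid_beheadE -!x_g; apply: g_incr.
Qed.

Lemma card_tall_fiber a C :
  #|[set b in tall_blocks | ((b : blocks) ord0, head_profile b) == (a, C)]|
    <= c * (m %/ s.+1).+1 ^ n.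
Proof.
set F := [set b in _ | _]; rewrite leqNgt; apply/negP => lt_F; apply: avoid.
have inF b : b \in F -> [/\ k <= #|head_profile b|, b ord0 = a & head_profile b = C].
  by rewrite !inE => /andP[? /eqP[? ?]].
have [b0 b0F] : exists b0, b0 \in F.
  by apply/set0Pn; rewrite -card_gt0 (leq_ltn_trans _ lt_F).
have card_tails : #|[set grid_behead b | b in F]| = #|F|.
  apply: card_in_imset => b b' /inF[_ ba _] /inF[_ b'a _] bb'.
  by apply: grid_behead_inj; rewrite ?ba ?b'a.
have [g gF g_incr] : contains_pattern (behead_pattern v) [set grid_behead b | b in F].
  by apply: NNPP => /card_avoid_tail; rewrite card_tails leqNgt lt_F.
have [h hC h_incr] : exists2 h : 'I_k -> 'I_s.+1, forall j, h j \in C & {homo h : i j / i < j}.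
  by apply: exists_increasing_in; have [? _ <-] := inF _ b0F.
have /fin_all_exists2[beta betaF beta_g] :
  forall p, exists2 b : blocks, b \in F & g p = grid_behead b by move=> p; apply/imsetP.
have /fin_all_exists2[x xb x_h] : forall p,
    exists2 y, y \in block_points (beta p) & h (v p ord0) = offset s y ord0.
  move=> p; have := hC (v p ord0); have [_ _ <-] := inF _ (betaF p).
  by case/imsetP => y; exists y.
have x_block p : block s (x p) = beta p by have [] := block_pointsP (xb p).
apply: (contains_patternS (x := x)) => [p | p q | p q j lt_pq].
- by have [] := block_pointsP (xb p).
- move/h_incr; rewrite !x_h; apply: ltn_offset.
  by rewrite !x_block; have [_ -> _] := inF _ (betaF p); have [_ -> _] := inF _ (betaF q).
- by apply: (ltn_block (s := s)); rewrite !x_block -!grid_beheadE -!beta_g; apply: g_incr.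
Qed.

Lemma card_wide_blocks :
  #|wide_blocks| <= (m %/ s.+1).+1 ^ n.+1 * #|{set grid n.+1 s.+1}| * k.
Proof.
rewrite -card_grid -card_prod.
by apply: (card_fibers_le (f := fun b => (grid_behead b, tail_profile b))) => -[l Q];
  apply: card_wide_fiber.
Qed.

Lemma card_tall_blocks :
  #|tall_blocks| <= (m %/ s.+1).+1 * #|{set 'I_s.+1}| * (c * (m %/ s.+1).+1 ^ n).
Proof.
rewrite -[X in X * _ * _]card_ord -card_prod.
by apply: (card_fibers_le (f := fun b : blocks => (b ord0, head_profile b))) => -[a C];
  apply: card_tall_fiber.
Qed.

Lemma card_avoid_le_blocks :
  #|S| <= c * s.+1 ^ n * k * #|block s @: S| + s.+1 ^ n.+2 *
    ((#|{set grid n.+1 s.+1}| * k + #|{set 'I_s.+1}| * c) * (m %/ s.+1).+1 ^ n.+1).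
Proof.
have -> : #|S| = \sum_b #|block_points b|.
  rewrite -sum1_card (partition_big (block s) xpredT) //; apply: eq_bigr => b _.
  by rewrite -sum1_card; apply: eq_bigl => x; rewrite inE.
apply: leq_trans (leq_sum _ (fun b _ => card_block_points_le b)) _.
rewrite !big_split /= -!big_distrr /= !sum_mem_card -addnA -mulnDr leq_add2l leq_mul2l.
apply/orP; right; have := leq_add card_wide_blocks card_tall_blocks.
move/leq_trans; apply; rewrite expnS; nia.
Qed.

End Blocks.

Lemma card_avoid_pattern_succ :
  exists C, forall m (S : {set grid n.+2 m}),
    ~ contains_pattern v S -> #|S| <= C * m ^ n.+1.
Proof.
pose s := (c * k * 2 ^ n.+2).+1.
pose K := #|{set grid n.+1 s.+1}| * k + #|{set 'I_s.+1}| * c.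
pose C := s.+1 + s.+1 * K * (2 * 2 ^ n.+1).
exists C; elim/ltn_ind => m IHm S avoid.
have [small | large] := leqP m s.+1.
  apply: leq_trans (max_card _) _; rewrite card_grid expnS leq_mul //.
  by rewrite (leq_trans small) // leq_addr.
have s_gt0 : 0 < s by [].
have blocks_le : m %/ s.+1 * s.+1 <= m := leq_divM m s.+1.
have lt_blocks : (m %/ s.+1).+1 < m by move: (m %/ s.+1) blocks_le => q; nia.
have le_2m : s.+1 * (m %/ s.+1).+1 <= 2 * m by move: (m %/ s.+1) blocks_le => q; nia.
have card_blocks := IHm _ lt_blocks _ (fun P => avoid (contains_pattern_block P)).
apply: leq_trans (card_avoid_le_blocks s avoid) _.
apply: (@leq_trans ((c * s.+1 ^ n * k * C + s.+1 ^ n.+2 * K) * (m %/ s.+1).+1 ^ n.+1)).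
  move: (c * s.+1 ^ n * k) => L; rewrite -/K mulnDl.
  apply: leq_add; last by rewrite mulnA.
  by rewrite -mulnA leq_mul2l card_blocks orbT.
apply: (leq_rescale_pow (s := s.+1)) => //.
rewrite [s.+1 ^ n.+2]expnS [s.+1 ^ n.+1]expnS; apply: rescaled_constant_le.
by rewrite -expnS /s ltnW.
Qed.

End DimensionStep.

Lemma card_avoid_pattern_le n k (T : finType) (v : T -> 'I_n.+1 -> 'I_k) :
  exists c, forall m (S : {set grid n.+1 m}),
    ~ contains_pattern v S -> #|S| <= c * m ^ n.
Proof.
elim: n k T v => [|n IHn] k T v.
  by exists k => m S /card_avoid_pattern1; rewrite expn0 muln1.
have [c card_avoid_tail] := IHn k T (behead_pattern v).
exact: card_avoid_pattern_succ card_avoid_tail.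
Qed.

Lemma contains_copy_pattern (T : finType) (le : rel T) d
    (L : 'I_d.+1 -> T -> 'I_#|T|) m (S : {set grid d.+1 m}) :
  (forall i, injective (L i)) -> (forall p q, le p q = [forall i, L i p <= L i q]) ->
  contains_pattern (fun p i => L i p) S -> contains_copy le S.
Proof.
move=> L_inj le_L [G GS G_incr]; exists G; split => [p q Gpq | ]; last split => // p q.
  case: (ltngtP (L ord0 p) (L ord0 q)) => [lt_pq | lt_qp | /val_inj/L_inj //].
  - by have := G_incr p q ord0 lt_pq; rewrite Gpq ltnn.
  - by have := G_incr q p ord0 lt_qp; rewrite Gpq ltnn.
rewrite le_L /grid_le; apply: eq_forallb => i.
case: (ltngtP (L i p) (L i q)) => [lt_pq | lt_qp | /val_inj/L_inj ->].
- by rewrite (ltnW (G_incr p q i lt_pq)).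
- by rewrite leqNgt (G_incr q p i lt_qp).
- by rewrite !leqnn.
Qed.

Theorem corollary4 (T : finType) (le : rel T) (d : nat) :
  is_poset le -> poset_dim le d ->
  exists c : nat, forall (m : nat), 0 < m ->
    forall S : {set grid d m}, ~ contains_copy le S ->
      #|S| <= c * m ^ (d - 1).
Proof.
move=> _ [d_gt0 [[L [L_bij le_L]] _]].
case: d d_gt0 L L_bij le_L => // d _ L L_bij le_L.
have [c card_avoid] := card_avoid_pattern_le (fun p i => L i p).
exists c => m _ S no_copy; rewrite subn1; apply: card_avoid => /contains_copy_pattern copy.
by apply/no_copy/copy => // i; apply: bij_inj.
Qed.
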